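(* Let $n\ge 3$, and consider the polynomial ring $\mathbb{Q}[a_0,\ldots,a_{n-1},r_1,\ldots,r_n]$ in $2n$ indeterminates. For $i=1,\ldots,n$ let $s_i$ be the elementary symmetric polynomial of degree $i$ in $r_1,\ldots,r_n$ and $v_i=a_{n-i}-(-1)^i s_i$. Let $D_2\in\mathbb{Q}[a_0,\ldots,a_{n-1}]$ be the polynomial obtained by expressing the symmetric polynomial $\prod_{1\le i,j,k\le n,\ i<j,\ j\ne k,\ k\ne i}(2r_k-r_i-r_j)$ in terms of $a_{n-i}=(-1)^i s_i$. Then \begin{align*} \Big\langle \prod_{\substack{1\le i,j,k\le n\\ i<j,\ j\ne k,\ k\ne i}}(2r_k-r_i-r_j),\,v_1,\ldots,v_n\Big\rangle\cap\mathbb{Q}[a_0,\ldots,a_{n-1}] &=\langle 2r_1-r_2-r_3,\,v_1,\ldots,v_n\rangle\cap\mathbb{Q}[a_0,\ldots,a_{n-1}]\\ &=\langle D_2\rangle . \end{align*}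
   Context: $\langle g_1,\ldots,g_m\rangle$ denotes the ideal generated by $g_1,\ldots,g_m$ (in the ring containing the generators). *)

From mathcomp Require Import all_boot all_algebra.
From mathcomp Require Import mpoly.
Set Implicit Arguments. Unset Strict Implicit. Unset Printing Implicit Defensive.
Import GRing.Theory.
Local Open Scope ring_scope.

Definition in_ideal (R : comPzRingType) (gs : seq R) (p : R) : Prop :=
  exists c : 'I_(size gs) -> R, p = \sum_(i < size gs) c i * gs`_i.

(* Variable r_{k+1} (0-based index k) of Q[r_1,...,r_n]; 0 if k >= n. *)
Definition rX (n k : nat) : {mpoly rat[n]} :=
  if insub k is Some i then 'X_i else 0.

Definition Pprod (n : nat) : {mpoly rat[n]} :=
  \prod_(i < n) \prod_(j < n | (i < j)%N) \prod_(k < n | (k != i) && (k != j))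
     (2 * 'X_k - 'X_i - 'X_j).

(* The big ring Q[a_0..a_{n-1}, r_1..r_n] = {mpoly rat[n + n]}:
   a_j = 'X_(lshift n j), r_{i+1} = 'X_(rshift n i). *)
Definition emb_a (n : nat) (q : {mpoly rat[n]}) : {mpoly rat[n + n]} :=
  comp_mpoly [tuple ('X_(lshift n j) : {mpoly rat[n + n]}) | j < n] q.
Definition emb_r (n : nat) (q : {mpoly rat[n]}) : {mpoly rat[n + n]} :=
  comp_mpoly [tuple ('X_(rshift n i) : {mpoly rat[n + n]}) | i < n] q.

(* v_{i+1} = a_{n-(i+1)} - (-1)^(i+1) s_{i+1}, for i = 0..n-1. *)
Definition vgen (n : nat) (i : 'I_n) : {mpoly rat[n + n]} :=
  'X_(lshift n (rev_ord i)) - emb_r ((-1) ^+ i.+1 * mesym n rat i.+1).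

Definition vgens (n : nat) : seq {mpoly rat[n + n]} :=
  [seq vgen i | i <- enum 'I_n].

Definition a_to_r (n : nat) : n.-tuple {mpoly rat[n]} :=
  [tuple (-1) ^+ (n - j) * mesym n rat (n - j) | j < n].

From mathcomp Require Import all_boot all_algebra.
From mathcomp Require Import fingroup perm mpoly.
From mathcomp Require Import ring lra.
Import GRing.Theory.
Local Open Scope ring_scope.

(* Substituting a_(n-i) := (-1)^i s_i kills every v_i, and modulo the v_i each
   a_j is congruent to its substitute; hence for g in Q[r], q(a) lies in
   <g, v_1, ..., v_n> iff g divides q(sigma), the image of q under this
   substitution.  The polynomial q(sigma) is symmetric, so if 2r_1 - r_2 - r_3
   divides it, so do all the forms 2r_k - r_i - r_j.  Each form generates the
   kernel of the substitution r_k := (r_i + r_j)/2, which kills no other form;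
   so the forms are pairwise coprime primes and their product divides q(sigma).
   Finally, if q(sigma) = h * D2(sigma), then h is symmetric, hence h = G(sigma)
   by the fundamental theorem on symmetric polynomials, and as substituting
   sigma is injective, q = G * D2. *)

Definition mdvd {R : comPzRingType} (a b : R) : Prop := exists c, b = c * a.

Section Ideals.
Variable R : comPzRingType.
Implicit Types (gs : seq R) (a b p q : R).

Lemma in_ideal0 gs : in_ideal gs 0.
Proof. by exists (fun _ => 0); rewrite big1 // => i _; rewrite mul0r. Qed.

Lemma in_idealD gs p q : in_ideal gs p -> in_ideal gs q -> in_ideal gs (p + q).
Proof.
move=> [c ->] [d ->]; exists (fun i => c i + d i).
by rewrite -big_split; apply: eq_bigr => i _; rewrite mulrDl.
Qed.

Lemma in_idealMl gs a p : in_ideal gs p -> in_ideal gs (a * p).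
Proof.
move=> [c ->]; exists (fun i => a * c i).
by rewrite mulr_sumr; apply: eq_bigr => i _; rewrite mulrA.
Qed.

Lemma in_ideal_sum gs (I : Type) (r : seq I) (F : I -> R) :
  (forall i, in_ideal gs (F i)) -> in_ideal gs (\sum_(i <- r) F i).
Proof.
move=> h; elim: r => [|x r IH]; first by rewrite big_nil; apply: in_ideal0.
by rewrite big_cons; apply: in_idealD.
Qed.

Lemma in_ideal_mem gs g : g \in gs -> in_ideal gs g.
Proof.
move=> gs_g; have lt_g : (index g gs < size gs)%N by rewrite index_mem.
exists (fun i => ((i : nat) == index g gs)%:R).
rewrite (bigD1 (Ordinal lt_g)) //= eqxx mul1r nth_index // big1 ?addr0 //.
by move=> i /negbTE; rewrite -val_eqE /= => ->; rewrite mul0r.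
Qed.

Lemma in_ideal_sub gs hs p : {subset gs <= hs} -> in_ideal gs p -> in_ideal hs p.
Proof.
move=> sub [c ->]; apply: in_ideal_sum => i; apply: in_idealMl.
by apply/in_ideal_mem/sub/mem_nth.
Qed.

Lemma in_ideal_seq1 g p : in_ideal [:: g] p <-> mdvd g p.
Proof.
split; first by move=> [c ->]; exists (c ord0); rewrite big_ord1.
by move=> [c ->]; apply/in_idealMl/in_ideal_mem; rewrite inE.
Qed.

Lemma in_ideal_subM gs a b a' b' : in_ideal gs (a - b) -> in_ideal gs (a' - b') ->
  in_ideal gs (a * a' - b * b').
Proof.
move=> h h'; have -> : a * a' - b * b' = a' * (a - b) + b * (a' - b') by ring.
by apply: in_idealD; apply: in_idealMl.
Qed.

Lemma in_ideal_subX gs a b e : in_ideal gs (a - b) -> in_ideal gs (a ^+ e - b ^+ e).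
Proof.
move=> h; elim: e => [|e IH]; first by rewrite !expr0 subrr; apply: in_ideal0.
by rewrite !exprS; apply: in_ideal_subM.
Qed.

Lemma mdvd_trans a b c : mdvd a b -> mdvd b c -> mdvd a c.
Proof. by move=> [x ->] [y ->]; exists (y * x); rewrite mulrA. Qed.

End Ideals.

Section DvdProd.
Variables (A : comNzRingType) (B : idomainType) (I : eqType).
Variables (l : I -> A) (rho : I -> {rmorphism A -> B}).

Lemma mdvd_prod (r : seq I) (f : A) : uniq r ->
  {in r, forall x g, rho x g = 0 <-> mdvd (l x) g} ->
  {in r &, forall x y, x != y -> rho x (l y) != 0} ->
  {in r, forall x, mdvd (l x) f} -> mdvd (\prod_(x <- r) l x) f.
Proof.
elim: r f => [|x r IH] f /=; first by move=> *; exists f; rewrite big_nil mulr1.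
move=> /andP[r'x ur] ker sep dvd_f.
have sub_r : {subset r <= x :: r} by move=> y r_y; rewrite inE r_y orbT.
have [g fE] := IH f ur (sub_in1 sub_r ker) (sub_in2 sub_r sep) (sub_in1 sub_r dvd_f).
have x_r := mem_head x r.
have rho_prod : rho x (\prod_(y <- r) l y) != 0.
  rewrite rmorph_prod prodf_seq_neq0; apply/allP => y r_y /=.
  by apply: sep => //; [exact: sub_r | apply: contraNneq r'x => ->].
have /(ker x x_r) [c gE] : rho x g = 0.
  have := dvd_f x x_r; rewrite -(ker x x_r) fE rmorphM /=.
  by move/eqP; rewrite mulf_eq0 (negbTE rho_prod) orbF => /eqP.
by exists c; rewrite fE gE big_cons mulrA.
Qed.

End DvdProd.

Section CompMpoly.
Variable R : comNzRingType.

Lemma comp_mpolyA n k l (p : {mpoly R[n]}) (t : n.-tuple {mpoly R[k]})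
    (u : k.-tuple {mpoly R[l]}) :
  (p \mPo t) \mPo u = p \mPo [tuple tnth t i \mPo u | i < n].
Proof.
rewrite (comp_mpolyE p t) (comp_mpolyE p) raddf_sum; apply: eq_bigr => m _.
rewrite /= comp_mpolyZ rmorph_prod; congr (_ *: _); apply: eq_bigr => i _.
by rewrite rmorphXn tnth_mktuple.
Qed.

Lemma in_ideal_comp_mpolyB n k (gs : seq {mpoly R[k]}) (p : {mpoly R[n]})
    (t1 t2 : n.-tuple {mpoly R[k]}) :
  (forall i, in_ideal gs (tnth t1 i - tnth t2 i)) ->
  in_ideal gs ((p \mPo t1) - (p \mPo t2)).
Proof.
move=> t12; rewrite (comp_mpolyE p t1) (comp_mpolyE p t2) -sumrB.
apply: in_ideal_sum => m; rewrite -scalerBr -mul_mpolyC; apply: in_idealMl.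
apply: (big_ind2 (fun x y => in_ideal gs (x - y))).
- by rewrite subrr; apply: in_ideal0.
- by move=> *; apply: in_ideal_subM.
- by move=> i _; apply: in_ideal_subX.
Qed.

End CompMpoly.

Section EliminateA.
Context {n : nat}.
Local Notation P := {mpoly rat[n]}.

Definition elim_a : (n + n).-tuple P :=
  [tuple match split l with inl j => tnth (a_to_r n) j | inr i => 'X_i end
  | l < n + n].

Lemma elim_a_emb_a q : emb_a q \mPo elim_a = q \mPo a_to_r n.
Proof.
rewrite /emb_a comp_mpolyA; congr (_ \mPo _); apply: eq_from_tnth => j.
rewrite !tnth_mktuple comp_mpolyXU -tnth_nth tnth_mktuple.
by rewrite (unsplitK (inl j)) tnth_mktuple.
Qed.

Lemma elim_a_emb_r q : emb_r q \mPo elim_a = q.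
Proof.
rewrite /emb_r comp_mpolyA -[RHS]comp_mpoly_id; congr (_ \mPo _).
apply: eq_from_tnth => i; rewrite !tnth_mktuple comp_mpolyXU -tnth_nth.
by rewrite tnth_mktuple (unsplitK (inr i)).
Qed.

Lemma elim_a_vgen i : vgen i \mPo elim_a = 0.
Proof.
rewrite /vgen raddfB /= elim_a_emb_r comp_mpolyXU -tnth_nth tnth_mktuple.
by rewrite (unsplitK (inl _)) tnth_mktuple /= subKn // subrr.
Qed.

Lemma vgen_rev_ord j :
  'X_(lshift n j) - emb_r (tnth (a_to_r n) j) = vgen (rev_ord j).
Proof. by rewrite /vgen rev_ordK tnth_mktuple /= subnSK. Qed.

Lemma in_ideal_emb_a (g q : P) :
  in_ideal (emb_r g :: vgens n) (emb_a q) <-> mdvd g (q \mPo a_to_r n).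
Proof.
have vgens_vgen i : vgen i \in vgens n by apply: map_f; rewrite mem_enum.
split=> [[c qE]|[c qE]].
  exists (c ord0 \mPo elim_a).
  rewrite -elim_a_emb_a qE big_ord_recl rmorphD rmorphM /= elim_a_emb_r rmorph_sum big1 ?addr0 // => i _.
  have /mapP[j _ ->] : (vgens n)`_i \in vgens n by apply: mem_nth.
  by rewrite rmorphM /= elim_a_vgen mulr0.
have -> : emb_a q = (emb_a q - emb_r (q \mPo a_to_r n)) + emb_r c * emb_r g.
  by rewrite qE /emb_r rmorphM /= subrK.
apply: in_idealD; last by apply/in_idealMl/in_ideal_mem; rewrite mem_head.
apply: (@in_ideal_sub _ (vgens n)) => [g' vg'|]; first by rewrite inE vg' orbT.
rewrite /emb_a /emb_r comp_mpolyA; apply: in_ideal_comp_mpolyB => j.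
rewrite 2!tnth_mktuple; apply: in_ideal_mem.
by rewrite vgen_rev_ord vgens_vgen.
Qed.

End EliminateA.

Section ElementarySubstitution.
Context {n : nat}.
Local Notation P := {mpoly rat[n]}.

Definition mesyms : n.-tuple P := [tuple mesym n rat i.+1 | i < n].
Definition a_of_e : n.-tuple P := [tuple (-1) ^+ (n - j) * 'X_(rev_ord j) | j < n].
Definition e_of_a : n.-tuple P := [tuple (-1) ^+ i.+1 * 'X_(rev_ord i) | i < n].

Lemma a_of_e_mesyms : [tuple tnth a_of_e j \mPo mesyms | j < n] = a_to_r n.
Proof.
apply: eq_from_tnth => j; rewrite !tnth_mktuple rmorphM rmorph_sign /=.
by rewrite comp_mpolyXU -tnth_nth tnth_mktuple /= subnSK.
Qed.

Lemma a_of_e_e_of_a : [tuple tnth a_of_e j \mPo e_of_a | j < n] = [tuple 'X_j | j < n].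
Proof.
apply: eq_from_tnth => j; rewrite !tnth_mktuple rmorphM rmorph_sign /=.
by rewrite comp_mpolyXU -tnth_nth tnth_mktuple /= rev_ordK subnSK // signrMK.
Qed.

Lemma e_of_a_a_to_r : [tuple tnth e_of_a i \mPo a_to_r n | i < n] = mesyms.
Proof.
apply: eq_from_tnth => i; rewrite !tnth_mktuple rmorphM rmorph_sign /=.
by rewrite comp_mpolyXU -tnth_nth tnth_mktuple /= subKn // signrMK.
Qed.

Lemma a_to_r_inj : injective (comp_mpoly (a_to_r n)).
Proof.
move=> p q /eqP; rewrite -subr_eq0 -raddfB /= -a_of_e_mesyms -comp_mpolyA.
move=> /eqP/msym_fundamental_un0 pq0; apply/eqP; rewrite -subr_eq0.
by rewrite -[p - q]comp_mpoly_id -a_of_e_e_of_a -comp_mpolyA pq0 comp_mpoly0.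
Qed.

Lemma a_to_r_sym (q : P) : q \mPo a_to_r n \is symmetric.
Proof.
apply: mcomp_sym => j; rewrite -tnth_nth tnth_mktuple.
by apply/issymP => s; rewrite msymM rmorph_sign (issymP _ (mesym_sym _ _ _)).
Qed.

Lemma sym_a_to_r (f : P) : f \is symmetric -> exists q, f = q \mPo a_to_r n.
Proof.
move=> /sym_fundamental [t [tE _]]; exists (t \mPo e_of_a).
by rewrite comp_mpolyA e_of_a_a_to_r tE.
Qed.

End ElementarySubstitution.

Section LinearForms.
Context {n : nat}.
Local Notation P := {mpoly rat[n]}.
Implicit Types (i j k : 'I_n) (p : P).

Definition lform i j k : P := 2 * 'X_k - 'X_i - 'X_j.

(* A generic point of the hyperplane lform i j k = 0. *)
Definition lform_root i j k : n.-tuple P :=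
  [tuple if l == k then 2^-1 *: ('X_i + 'X_j) else 'X_l | l < n].

Lemma tnth_lform_root i j k l :
  tnth (lform_root i j k) l = if l == k then 2^-1 *: ('X_i + 'X_j) else 'X_l.
Proof. exact: tnth_mktuple. Qed.

Lemma mul2_half : 2 * (2^-1)%:MP = 1 :> P.
Proof. by rewrite -mpolyC_nat -mpolyCM divff // mpolyC1. Qed.

Lemma lform_rootK i j k : k != i -> k != j -> lform i j k \mPo lform_root i j k = 0.
Proof.
move=> ki kj; rewrite /lform !rmorphB rmorphM rmorph_nat /= !comp_mpolyXU.
rewrite -!tnth_nth !tnth_lform_root eqxx (eq_sym i) (eq_sym j) (negbTE ki) (negbTE kj).
by rewrite -mul_mpolyC mulrA mul2_half mul1r; ring.
Qed.

Lemma comp_lform_root_eq0 i j k p : k != i -> k != j ->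
  p \mPo lform_root i j k = 0 <-> mdvd (lform i j k) p.
Proof.
move=> ki kj; split=> [p0|[c ->]]; last by rewrite rmorphM /= lform_rootK ?mulr0.
apply/in_ideal_seq1; rewrite -[p]comp_mpoly_id -[_ \mPo _]subr0 -p0.
apply: in_ideal_comp_mpolyB => l; rewrite tnth_lform_root tnth_mktuple.
have [->|_] := eqVneq l k; last by rewrite subrr; apply: in_ideal0.
apply/in_ideal_seq1; exists (2^-1)%:MP.
rewrite /lform -mul_mpolyC !mulrBr mulrA [_ * 2]mulrC mul2_half mul1r; ring.
Qed.

Lemma meval_lform (v : 'I_n -> rat) i j k : (lform i j k).@[v] = 2 * v k - v i - v j.
Proof. by rewrite /lform !mevalB mevalM !mevalXU rmorph_nat. Qed.

Lemma lform_neq0 i j k : k != i -> k != j -> lform i j k != 0.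
Proof.
move=> ki kj; apply/eqP => /(congr1 (meval (fun l => (k == l)%:R))).
by rewrite meval_lform meval0 eqxx (negbTE ki) (negbTE kj) /= mulr1 !subr0.
Qed.

Lemma indicator_pair_inj i j i' j' : (i < j)%N -> (i' < j')%N ->
    (forall m, (m == i)%:R + (m == j)%:R = (m == i')%:R + (m == j')%:R :> rat) ->
  i' = i /\ j' = j.
Proof.
move=> lt_ij lt_ij' E.
have ij' : i' != j' by rewrite -val_eqE /= neq_ltn lt_ij'.
have mem_ij m : (m == i')%:R + (m == j')%:R = 1 :> rat -> (m == i) || (m == j).
  by rewrite -E; case: (m == i) => //=; case: (m == j) => //= /eqP; rewrite eq_sym oner_eq0.
have i'ij : (i' == i) || (i' == j).
  by apply: mem_ij; rewrite eqxx (negbTE ij') addr0.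
have j'ij : (j' == i) || (j' == j).
  by apply: mem_ij; rewrite eqxx eq_sym (negbTE ij') add0r.
case/orP: i'ij j'ij lt_ij' ij' => /eqP-> /orP[]/eqP->; rewrite ?eqxx //.
by move/(ltn_trans lt_ij); rewrite ltnn.
Qed.

Lemma lform_root_sep i j k i' j' k' :
    (i < j)%N -> k != i -> k != j -> (i' < j')%N -> k' != i' -> k' != j' ->
  lform i' j' k' \mPo lform_root i j k = 0 -> (i', j', k') = (i, j, k).
Proof.
move=> lt_ij ki kj lt_ij' ki' kj' L'0.
have ij : i != j by rewrite -val_eqE /= neq_ltn lt_ij.
have ij' : i' != j' by rewrite -val_eqE /= neq_ltn lt_ij'.
(* [w m] is the image of the indicator vector of [m] under [lform_root i j k]. *)
pose w m l : rat :=
  if l == k then 2^-1 * ((m == i)%:R + (m == j)%:R) else (m == l)%:R.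
have ev m : 2 * w m k' - w m i' - w m j' = 0.
  move: (congr1 (meval (fun l => (m == l)%:R)) L'0).
  rewrite comp_mpoly_meval meval0 meval_lform !tnth_lform_root.
  by rewrite !(fun_if (meval _)) !mevalZ !mevalD !mevalXU.
clear L'0. (* lra fails on hypotheses that are equations between polynomials. *)
have half_le m : 2^-1 * ((m == i)%:R + (m == j)%:R) <= 2^-1 :> rat.
  by case: eqVneq => [->|_]; rewrite ?eqxx ?(negbTE ij); case: (m == j) => /=; lra.
have k'E : k' = k.
  apply/eqP/negPn/negP => k'k; move: (ev k') (half_le k').
  rewrite /w (negbTE k'k) eqxx (negbTE ki') (negbTE kj').
  have [<-|_] := eqVneq i' k; first by rewrite (eq_sym j') (negbTE ij') /=; lra.
  by case: (j' == k) => /=; lra.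
subst k'; suff [-> ->] : i' = i /\ j' = j by [].
apply: indicator_pair_inj => // m; move: (ev m).
by rewrite /w eqxx (eq_sym i') (eq_sym j') (negbTE ki') (negbTE kj'); lra.
Qed.

End LinearForms.

Lemma perm_triple {T : finType} {a b c i j k : T} :
    a != b -> c != a -> c != b -> i != j -> k != i -> k != j ->
  exists s : {perm T}, [/\ s a = i, s b = j & s c = k].
Proof.
move=> ab ca cb ij ki kj; have ik : i != k by rewrite eq_sym.
have tperm_neq x y z w : tperm x y z != tperm x y w = (z != w).
  by rewrite (inj_eq perm_inj).
pose a1 := tperm c k a; pose b1 := tperm c k b.
have a1k : a1 != k by rewrite -(tpermL c k) tperm_neq eq_sym.
have b1k : b1 != k by rewrite -(tpermL c k) tperm_neq eq_sym.
pose b2 := tperm a1 i b1.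
have b2i : b2 != i by rewrite -(tpermL a1 i) tperm_neq eq_sym tperm_neq.
have b2k : b2 != k by rewrite -(tpermD a1k ik) tperm_neq.
exists (tperm c k * tperm a1 i * tperm b2 j)%g; rewrite !permM.
by split; rewrite tpermL // !tpermD // eq_sym.
Qed.

Section Symmetry.
Context {n : nat}.
Local Notation P := {mpoly rat[n]}.
Implicit Types (i j k : 'I_n) (f p : P).

Lemma msymXU (s : 'S_n) i : msym s ('X_i : P) = 'X_(s i).
Proof.
rewrite msymX; congr mpolyX; apply/mnmP => l.
by rewrite mnmE !mnm1E -(inj_eq (@perm_inj _ s)) permKV.
Qed.

Lemma msym_lform (s : 'S_n) i j k : msym s (lform i j k) = lform (s i) (s j) (s k).
Proof. by rewrite /lform !msymB msymM rmorph_nat !msymXU. Qed.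

Lemma mdvd_msym f p (s : 'S_n) : f \is symmetric -> mdvd p f -> mdvd (msym s p) f.
Proof. by move=> /issymP fsym [c fE]; exists (msym s c); rewrite -msymM -fE fsym. Qed.

Lemma mdvd_lform_sym f a b c i j k : f \is symmetric ->
    a != b -> c != a -> c != b -> i != j -> k != i -> k != j ->
  mdvd (lform a b c) f -> mdvd (lform i j k) f.
Proof.
move=> fsym ab ca cb ij ki kj; have [s [<- <- <-]] := perm_triple ab ca cb ij ki kj.
by rewrite -msym_lform; apply: mdvd_msym.
Qed.

End Symmetry.

Section Triples.
Context {n : nat}.
Local Notation P := {mpoly rat[n]}.
Implicit Types (a b c i j k : 'I_n) (f : P).

Definition triple : finType := ('I_n * ('I_n * 'I_n))%type.
Definition proper_triple (x : triple) : bool :=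
  [&& (x.1 < x.2.1)%N, x.2.2 != x.1 & x.2.2 != x.2.1].
Definition proper_triples : seq triple := [seq x <- index_enum triple | proper_triple x].
Definition triple_form (x : triple) : P := lform x.1 x.2.1 x.2.2.

Lemma Pprod_triples : Pprod n = \prod_(x <- proper_triples) triple_form x.
Proof.
rewrite big_filter /Pprod.
under [LHS]eq_bigr => i _ do rewrite (pair_big_dep (fun j : 'I_n => (i < j)%N)).
by rewrite pair_big_dep.
Qed.

Lemma proper_triplesP x : reflect (proper_triple x) (x \in proper_triples).
Proof. by rewrite mem_filter mem_index_enum andbT; apply: idP. Qed.

Lemma Pprod_neq0 : Pprod n != 0.
Proof.
rewrite Pprod_triples prodf_seq_neq0; apply/allP => x /proper_triplesP.
by case/and3P => _ ki kj; apply/implyP => _; apply: lform_neq0.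
Qed.

Lemma lform_mdvd_Pprod i j k : (i < j)%N -> k != i -> k != j -> mdvd (lform i j k) (Pprod n).
Proof.
move=> lt_ij ki kj; have x_P : (i, (j, k)) \in proper_triples.
  by apply/proper_triplesP/and3P.
rewrite Pprod_triples (bigD1_seq _ x_P) ?filter_uniq ?index_enum_uniq //.
by eexists; rewrite mulrC.
Qed.

Lemma mdvd_Pprod f a b c : f \is symmetric -> a != b -> c != a -> c != b ->
  mdvd (lform a b c) f -> mdvd (Pprod n) f.
Proof.
move=> fsym ab ca cb abc_f; rewrite Pprod_triples.
pose rho x : {rmorphism P -> P} := comp_mpoly (lform_root x.1 x.2.1 x.2.2).
apply: (@mdvd_prod _ _ _ triple_form rho); first by rewrite filter_uniq ?index_enum_uniq.
- move=> x /proper_triplesP /and3P[_ ki kj] g; exact: comp_lform_root_eq0.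
- move=> x y /proper_triplesP /and3P[lt_ij ki kj] /proper_triplesP /and3P[lt_ij' ki' kj'].
  apply: contra_neq => /lform_root_sep -/(_ lt_ij ki kj lt_ij' ki' kj').
  by case: x y {ki kj ki' kj' lt_ij lt_ij'} => [? [? ?]] [? [? ?]] /= [-> -> ->].
- move=> x /proper_triplesP /and3P[lt_ij ki kj].
  by apply: mdvd_lform_sym abc_f => //; rewrite -val_eqE /= neq_ltn lt_ij.
Qed.

End Triples.

Lemma rXE n k (lt_kn : (k < n)%N) : rX n k = 'X_(Ordinal lt_kn).
Proof. by rewrite /rX insubT. Qed.

Section Discriminant.
Context {n : nat} {D2 : {mpoly rat[n]}}.
Hypothesis D2E : D2 \mPo a_to_r n = Pprod n.

Lemma mdvd_Pprod_D2 (q : {mpoly rat[n]}) :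
  mdvd (Pprod n) (q \mPo a_to_r n) <-> mdvd D2 q.
Proof.
split=> [[h qE]|[c ->]]; last by exists (c \mPo a_to_r n); rewrite rmorphM /= D2E.
have /sym_a_to_r[G hE] : h \is symmetric.
  apply: (msymMK Pprod_neq0); first by rewrite -D2E a_to_r_sym.
  by rewrite mulrC -qE a_to_r_sym.
by exists G; apply: a_to_r_inj; rewrite qE hE rmorphM /= D2E.
Qed.

End Discriminant.

Theorem proposition7 (n : nat) (hn : (3 <= n)%N) (D2 : {mpoly rat[n]})
  (hD2 : comp_mpoly (a_to_r n) D2 = Pprod n) :
  forall q : {mpoly rat[n]},
    (in_ideal (emb_r (Pprod n) :: vgens n) (emb_a q) <->
     in_ideal (emb_r (2 * rX n 0 - rX n 1 - rX n 2) :: vgens n) (emb_a q)) /\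
    (in_ideal (emb_r (2 * rX n 0 - rX n 1 - rX n 2) :: vgens n) (emb_a q) <->
     in_ideal [:: D2] q).
Proof.
move=> q; have lt0n : (0 < n)%N by apply: leq_trans hn.
have lt1n : (1 < n)%N by apply: leq_trans hn.
pose i := Ordinal lt1n; pose j := Ordinal (hn : (2 < n)%N); pose k := Ordinal lt0n.
have -> : 2 * rX n 0 - rX n 1 - rX n 2 = lform i j k by rewrite /lform !rXE.
rewrite !in_ideal_emb_a in_ideal_seq1 -(mdvd_Pprod_D2 hD2).
have PL : mdvd (Pprod n) (q \mPo a_to_r n) <-> mdvd (lform i j k) (q \mPo a_to_r n).
  split; first by apply: mdvd_trans; apply: lform_mdvd_Pprod.
  by apply: mdvd_Pprod (a_to_r_sym q) _ _ _.
by split; [exact: PL | exact: iff_sym PL].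
Qed.
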